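(* Let $m$ be any nonzero complex number. Then for every nonnegative integer $n$, \begin{align*} &\sum_{k=0}^n\frac{((256-27m)k^3+384k^2+(176+21m)k-6m+24)\binom{4k}k}{(k+1)m^k} =-6m+\frac{8(2n+1)(4n+1)(4n+3)\binom{4n}n}{(n+1)m^n}, \\&\sum_{k=0}^n\frac{((256-27m)k^3+384k^2+(176+3m)k+24)\binom{4k}k}{(3k+1)m^k} =\frac{8(2n+1)(4n+1)(4n+3)\binom{4n}n}{(3n+1)m^n}, \\&\sum_{k=0}^n\frac{((256-27m)k^3+3(128-9m)k^2+2(88-3m)k+24)\binom{4k}k}{(3k+1)(3k+2)m^k} =\frac{8(2n+1)(4n+1)(4n+3)\binom{4n}n}{(3n+1)(3n+2)m^n}. \end{align*} Consequently, if $|m|>256/27$, then \begin{align*} &\sum_{k=0}^\infty\frac{((256-27m)k^3+384k^2+(176+21m)k-6m+24)\binom{4k}k}{(k+1)m^k}=-6m, \\&\sum_{k=0}^\infty\frac{((256-27m)k^3+384k^2+(176+3m)k+24)\binom{4k}k}{(3k+1)m^k}=0, \\&\sum_{k=0}^\infty\frac{((256-27m)k^3+3(128-9m)k^2+2(88-3m)k+24)\binom{4k}k}{(3k+1)(3k+2)m^k}=0. \end{align*} *)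

From HB Require Import structures.
From mathcomp Require Import all_boot all_order all_algebra.
From mathcomp Require Import complex.
From mathcomp Require Import all_classical all_reals all_analysis.
Set Implicit Arguments. Unset Strict Implicit. Unset Printing Implicit Defensive.
Import Order.TTheory GRing.Theory Num.Theory.
Import numFieldTopology.Exports numFieldNormedType.Exports.
Local Open Scope ring_scope.

(* The complex numbers C = R[i], viewed as a numClosedFieldType so that the
   generic topology/normed structure of MathComp-Analysis applies. *)
Definition C (R : realType) : numClosedFieldType := R[i].

Definition term1 (R : realType) (m : C R) (k : nat) : C R :=
  ((256 - 27 * m) * k%:R ^+ 3 + 384 * k%:R ^+ 2 + (176 + 21 * m) * k%:R - 6 * m + 24)
  * ('C(4 * k, k))%:R / ((k.+1)%:R * m ^+ k).

Definition term2 (R : realType) (m : C R) (k : nat) : C R :=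
  ((256 - 27 * m) * k%:R ^+ 3 + 384 * k%:R ^+ 2 + (176 + 3 * m) * k%:R + 24)
  * ('C(4 * k, k))%:R / ((3 * k + 1)%:R * m ^+ k).

Definition term3 (R : realType) (m : C R) (k : nat) : C R :=
  ((256 - 27 * m) * k%:R ^+ 3 + 3 * (128 - 9 * m) * k%:R ^+ 2
     + 2 * (88 - 3 * m) * k%:R + 24)
  * ('C(4 * k, k))%:R / ((3 * k + 1)%:R * (3 * k + 2)%:R * m ^+ k).

Definition rhsnum (R : realType) (n : nat) : C R :=
  8 * (2 * n + 1)%:R * (4 * n + 1)%:R * (4 * n + 3)%:R * ('C(4 * n, n))%:R.

(* Each right-hand side S satisfies S n + a (n+1) = S (n+1) for the summand a:
   after substituting C(4n+4, n+1) = C(4n, n) (4n+1)(4n+2)(4n+3)(4n+4) /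
   ((n+1)(3n+1)(3n+2)(3n+3)) this is a rational identity in n and m, so the
   finite sums telescope.  For the series, C(4n, n) 27^n <= 256^n (it is one
   term of the expansion of (1+3)^(4n)), hence the non-constant part of each
   right-hand side is O(n^3 (256/(27|m|))^n), which tends to 0. *)

From HB Require Import structures.
From mathcomp Require Import all_boot all_order all_algebra.
From mathcomp Require Import complex.
From mathcomp Require Import all_classical all_reals all_analysis.
From mathcomp Require Import ring lra zify.
Import Order.TTheory GRing.Theory Num.Theory.
Import numFieldTopology.Exports numFieldNormedType.Exports.
Local Open Scope classical_set_scope.
Local Open Scope ring_scope.

Lemma partial_sums_closed_form {V : nmodType} {a S : nat -> V} :
  a 0%N = S 0%N -> (forall n, S n + a n.+1 = S n.+1) ->
  forall n, \sum_(k < n.+1) a k = S n.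
Proof.
move=> a0 aS; elim=> [|n IHn]; first by rewrite big_ord1.
by rewrite big_ord_recr /= IHn aS.
Qed.

Lemma cvg_series_closed_form {K : numFieldType} {a S : K ^nat} {l : K} :
  (forall n, \sum_(k < n.+1) a k = S n) -> S @ \oo --> l -> series a @ \oo --> l.
Proof.
move=> aS Sl; rewrite -cvg_shiftS.
suff -> : (fun n => series a n.+1) = S by [].
by apply/funext => n; rewrite seriesEord /= aS.
Qed.

Lemma bin4nS n : ('C(4 * n.+1, n.+1) * (n.+1 * (3 * n + 1) * (3 * n + 2) * (3 * n + 3))
  = 'C(4 * n, n) * ((4 * n + 1) * (4 * n + 2) * (4 * n + 3) * (4 * n + 4)))%N.
Proof.
have := bin_fact (leq_pmull n (isT : 0 < 4)%N).
have := bin_fact (leq_pmull n.+1 (isT : 0 < 4)%N).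
have -> : (4 * n.+1 - n.+1 = (3 * n).+3)%N by lia.
have -> : (4 * n - n = 3 * n)%N by lia.
have -> : (4 * n.+1 = (4 * n).+4)%N by lia.
rewrite !factS => F1 F0.
apply/eqP; rewrite -(eqn_pmul2r (fact_gt0 n)) -(eqn_pmul2r (fact_gt0 (3 * n))); apply/eqP.
transitivity ((4 * n).+4 * ((4 * n).+3 * ((4 * n).+2 * ((4 * n).+1 * (4 * n)`!))))%N.
  by rewrite -F1; ring.
by rewrite -F0; ring.
Qed.

Lemma bin4nS_ratio (F : numFieldType) n :
  'C(4 * n.+1, n.+1)%:R = 'C(4 * n, n)%:R
    * ((4 * n + 1) * (4 * n + 2) * (4 * n + 3) * (4 * n + 4))%:R
    / (n.+1 * (3 * n + 1) * (3 * n + 2) * (3 * n + 3))%:R :> F.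
Proof. by rewrite -natrM -bin4nS natrM mulfK // pnatr_eq0 -lt0n !muln_gt0; lia. Qed.

Lemma bin4n_le n : ('C(4 * n, n) * 27 ^ n <= 256 ^ n)%N.
Proof.
have n3 : (3 * n < (4 * n).+1)%N by lia.
have -> : (256 ^ n = (1 + 3) ^ (4 * n))%N by rewrite expnM.
rewrite expnDn (bigD1 (Ordinal n3)) //=.
have -> : 'C(4 * n, 3 * n) = 'C(4 * n, n).
  by rewrite -bin_sub ?leq_pmull //; congr 'C(_, _); lia.
by rewrite exp1n mul1n expnM leq_addr.
Qed.

Lemma rhsnum_nat_le n :
  (8 * (2 * n + 1) * (4 * n + 1) * (4 * n + 3) * 'C(4 * n, n) * 27 ^ n
    <= 256 * n.+1 ^ 3 * 256 ^ n)%N.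
Proof.
have poly : (8 * (2 * n + 1) * (4 * n + 1) * (4 * n + 3) <= 256 * n.+1 ^ 3)%N by nia.
by rewrite -mulnA; apply: leq_mul poly (bin4n_le n).
Qed.

Section ClosedForms.
Context {R : realType} {m : C R}.
Hypothesis m_neq0 : m != 0.

Definition rhs1 n := - (6 * m) + rhsnum R n / (n.+1%:R * m ^+ n).
Definition rhs2 n := rhsnum R n / ((3 * n + 1)%:R * m ^+ n).
Definition rhs3 n := rhsnum R n / ((3 * n + 1)%:R * (3 * n + 2)%:R * m ^+ n).

Lemma term1_0 : term1 m 0 = rhs1 0.
Proof. by rewrite /term1 /rhs1 /rhsnum muln0 bin0 !expr0; field. Qed.

Lemma term2_0 : term2 m 0 = rhs2 0.
Proof. by rewrite /term2 /rhs2 /rhsnum muln0 bin0 !expr0; field. Qed.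

Lemma term3_0 : term3 m 0 = rhs3 0.
Proof. by rewrite /term3 /rhs3 /rhsnum muln0 bin0 !expr0; field. Qed.

Lemma rhs1S n : rhs1 n + term1 m n.+1 = rhs1 n.+1.
Proof.
rewrite /rhs1 /term1 /rhsnum bin4nS_ratio (exprS m n); field.
by rewrite expf_neq0 // m_neq0 ?nat1r -!natrM ?natr1 -?natrD !pnatr_eq0; lia.
Qed.

Lemma rhs2S n : rhs2 n + term2 m n.+1 = rhs2 n.+1.
Proof.
rewrite /rhs2 /term2 /rhsnum bin4nS_ratio (exprS m n); field.
by rewrite expf_neq0 // m_neq0 ?nat1r -!natrM ?natr1 -?natrD !pnatr_eq0; lia.
Qed.

Lemma rhs3S n : rhs3 n + term3 m n.+1 = rhs3 n.+1.
Proof.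
rewrite /rhs3 /term3 /rhsnum bin4nS_ratio (exprS m n); field.
by rewrite expf_neq0 // m_neq0 ?nat1r -!natrM ?natr1 -?natrD !pnatr_eq0; lia.
Qed.

End ClosedForms.

Lemma poly_geometric_le_harmonic {R : realType} (k : nat) (r : R) : 0 < r < 1 ->
  exists K : R, forall n, n.+1%:R ^+ k * r ^+ n <= K * harmonic n.
Proof.
(* r = exp (- a) and exp x >= x ^ (k+1) / (k+1)! for x = a (n+1). *)
case/andP => r0 r1; pose a := ln r^-1.
have a0 : 0 < a by rewrite ln_gt0 // invf_gt1.
have expRa : expR a = r^-1 by rewrite lnK // posrE invr_gt0.
exists (k.+1`!%:R / (r * a ^+ k.+1)) => n; rewrite /harmonic /=.
set y : R := n.+1%:R; have y0 : 0 < y by [].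
have ry : r ^+ n.+1 * expR (a * y) = 1.
  by rewrite expRM_natr expRa -exprMn mulfV ?gt_eqF // expr1n.
have := expR_ge1Dxn k (mulr_ge0 (ltW a0) (ltW y0)).
rewrite -/y => expR_ge.
have : r ^+ n.+1 * ((a * y) ^+ k.+1 / k.+1`!%:R) <= r ^+ n.+1 * expR (a * y).
  by rewrite ler_wpM2l ?exprn_ge0 ?ltW //; lra.
rewrite ry mulrA ler_pdivrMr // mul1r => bound.
rewrite mulrC -mulrA -invfM ler_pdivlMr ?mulr_gt0 ?exprn_gt0 //.
have -> : r ^+ n * y ^+ k * (r * a ^+ k.+1 * y) = r ^+ n.+1 * (a * y) ^+ k.+1.
  by rewrite exprMn !exprS; ring.
exact: bound.
Qed.

Lemma cvg_poly_geometric (R : realType) (k : nat) (r : R) : 0 < r < 1 ->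
  (fun n => n.+1%:R ^+ k * r ^+ n) @ \oo --> 0.
Proof.
move=> r01; have [K bound] := poly_geometric_le_harmonic k _ r01.
case/andP: r01 => r0 _.
apply: (@squeeze_cvgr _ _ _ _ (cst 0) (fun n => K * harmonic n)).
- by near=> n; rewrite bound andbT mulr_ge0 ?exprn_ge0 ?ltW.
- exact: cvg_cst.
- by rewrite -(mulr0 K); apply: cvgMl_tmp; exact: cvg_harmonic.
Unshelve. all: end_near.
Qed.

Lemma ler_div_geometric (R : realFieldType) (x d M a b rho : R) (n : nat) :
  0 <= x -> 1 <= d -> 0 < a -> 0 < rho -> x * a ^+ n <= M * b ^+ n ->
  x / (d * rho ^+ n) <= M * (b / (a * rho)) ^+ n.
Proof.
move=> x0 d1 a0 rho0 hx.
have d0 : 0 < d := lt_le_trans ltr01 d1.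
apply: (@le_trans _ _ (x / rho ^+ n)).
  apply: (ler_wpM2l x0).
  by rewrite lef_pV2 ?posrE ?mulr_gt0 ?exprn_gt0 // ler_pMl ?exprn_gt0.
rewrite expr_div_n exprMn invfM mulrA mulrA ler_pM2r ?invr_gt0 ?exprn_gt0 //.
by rewrite ler_pdivlMr ?exprn_gt0.
Qed.

Local Open Scope complex_scope.

Lemma cvgC0_le_real (R : realType) (T : Type) (F : set_system T) (FF : Filter F)
    (u : T -> C R) (v : T -> R) :
  (forall t, `|u t| <= (v t)%:C) -> v @ F --> 0 -> u @ F --> 0.
Proof.
move=> uv /cvgr0Pnorm_lt v0; apply/cvgr0Pnorm_lt.
case=> a b; rewrite ltcE /= => /andP[/eqP-> a0].
apply: filterS (v0 a a0) => t vta.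
apply: (le_lt_trans (uv t)); rewrite -complexr0 ltcR.
exact: le_lt_trans (ler_norm _) vta.
Qed.

Lemma rhsnum_cvg0 (R : realType) (m : C R) (d : nat -> C R) :
  (forall n, 1 <= `|d n|) -> 256%:R / 27%:R < `|m| ->
  (fun n => rhsnum R n / (d n * m ^+ n)) @ \oo --> 0.
Proof.
move=> d1; move: (normc_def m); set rho := Num.sqrt _ => normm.
rewrite normm -!(rmorph_nat (real_complex R)) -fmorph_div ltcR => rho_gt.
have rho0 : 0 < rho by apply: lt_trans rho_gt; rewrite divr_gt0.
pose q := 256 / (27 * rho).
have q01 : 0 < q < 1.
  rewrite divr_gt0 ?mulr_gt0 //= ltr_pdivrMr ?mulr_gt0 // mul1r.
  by move: rho_gt; rewrite ltr_pdivrMr // mulrC.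
apply: (@cvgC0_le_real _ _ _ _ _ (fun n => 256 * (n.+1%:R ^+ 3 * q ^+ n))); last first.
  by rewrite -(mulr0 256); apply: cvgMl_tmp; exact: cvg_poly_geometric.
move=> n; move: (d1 n) (normc_def (d n)); set delta := Num.sqrt _ => + normd.
rewrite normd -(rmorph1 (real_complex R)) lecR => delta1.
rewrite /rhsnum -!natrM normrM normfV normrM normrX normm normd normr_nat.
rewrite -!(rmorph_nat (real_complex R)) -rmorphXn -rmorphM -fmorph_div lecR mulrA.
apply: ler_div_geometric => //.
by rewrite -!natrX -!natrM ler_nat rhsnum_nat_le.
Qed.

Theorem lemma3p6 (R : realType) (m : C R) (hm : m != 0) :
  (forall n : nat,
     [/\ \sum_(k < n.+1) term1 m k = - (6 * m) + rhsnum R n / ((n.+1)%:R * m ^+ n),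
         \sum_(k < n.+1) term2 m k = rhsnum R n / ((3 * n + 1)%:R * m ^+ n)
       & \sum_(k < n.+1) term3 m k
           = rhsnum R n / ((3 * n + 1)%:R * (3 * n + 2)%:R * m ^+ n)]) /\
  (256%:R / 27%:R < `|m| ->
     [/\ series (term1 m) @ \oo --> - (6 * m),
         series (term2 m) @ \oo --> (0 : C R)
       & series (term3 m) @ \oo --> (0 : C R)]).
Proof.
have sum1 := partial_sums_closed_form term1_0 (rhs1S hm).
have sum2 := partial_sums_closed_form term2_0 (rhs2S hm).
have sum3 := partial_sums_closed_form term3_0 (rhs3S hm).
split=> [n | m_gt]; first by split; [exact: sum1 | exact: sum2 | exact: sum3].
split; [apply: cvg_series_closed_form sum1 _ | apply: cvg_series_closed_form sum2 _
       | apply: cvg_series_closed_form sum3 _].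
- rewrite -[X in _ --> X]addr0; apply: cvgD; first exact: cvg_cst.
  by apply: rhsnum_cvg0 m_gt => n; rewrite normr_nat ler1n.
- by apply: rhsnum_cvg0 m_gt => n; rewrite normr_nat ler1n addn1.
- apply: rhsnum_cvg0 m_gt => n.
  by rewrite normrM !normr_nat -natrM ler1n muln_gt0 !addn_gt0 orbT.
Qed.
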